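(* Let $P\subseteq\mathbb{R}^d$ be a lattice polytope of dimension $d$, and suppose there are Fine core normals $a_0,\dots,a_\ell$ of $P$ and coefficients $\lambda_0,\dots,\lambda_\ell\in\mathbb{R}_{>0}$ such that $\sum_{i=0}^{\ell}\lambda_i a_i=0$. Then there is a lattice polytope $Q$ of dimension at most $\ell$ such that $\mu^F(P)=\mu^F(Q)$.
   Context: For a $d$-dimensional rational polytope $P\subseteq\mathbb{R}^d$ and $a\in(\mathbb{Z}^d)^*$ let $h_P(a)=\min_{x\in P}\langle a,x\rangle$. For $s>0$ the Fine adjoint polytope is $P^{F(s)}=\{x\in\mathbb{R}^d : \langle a,x\rangle\ge h_P(a)+s \text{ for all } a\in(\mathbb{Z}^d)^*\setminus\{0\}\}$. The Fine $\mathbb{Q}$-codegree is $\mu^F(P)=(\sup\{s>0 : P^{F(s)}\neq\emptyset\})^{-1}$, the Fine number is $n^F(P)=1/\mu^F(P)$, and the Fine core is $\operatorname{core}^F(P)=P^{F(n^F(P))}$. A Fine core normal of $P$ is a nonzero $a\in(\mathbb{Z}^d)^*$ with $\langle a,y\rangle=h_P(a)+n^F(P)$ for all $y\in\operatorname{core}^F(P)$. The Fine $\mathbb{Q}$-codegree of a polytope that is a lattice polytope with respect to some lattice $\Lambda$ is defined analogously using $\Lambda$ and its dual lattice in place of $\mathbb{Z}^d$ and $(\mathbb{Z}^d)^*$. *)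

From HB Require Import structures.
From mathcomp Require Import all_boot all_order all_algebra.
From mathcomp Require Import boolp classical_sets reals.
Set Implicit Arguments. Unset Strict Implicit. Unset Printing Implicit Defensive.
Import Order.TTheory GRing.Theory Num.Theory.
Local Open Scope ring_scope.
Local Open Scope classical_set_scope.

Section Fine.
Variable R : realType.

(* pairing between (R^d)^* and R^d, both represented as row vectors *)
Definition dotp (d : nat) (a x : 'rV[R]_d) : R := \sum_(i < d) a 0 i * x 0 i.

(* points of Z^d (and, via dotp, elements of (Z^d)^* ) *)
Definition lattice_pt (d : nat) (v : 'rV[R]_d) : Prop :=
  forall i, v 0 i \is a Num.int.

Definition conv (d : nat) (S : seq 'rV[R]_d) : set 'rV[R]_d :=
  [set x | exists w : 'I_(size S) -> R,
     (forall i, 0 <= w i) /\ \sum_i w i = 1 /\ x = \sum_i w i *: S`_(val i)].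

(* affine dimension of conv S (S nonempty): rank of the differences S_i - S_0 *)
Definition conv_dim (d : nat) (S : seq 'rV[R]_d) : nat :=
  \rank (\matrix_(i < size S) (S`_i - S`_0)).

Definition full_dim_lattice_polytope (d : nat) (P : set 'rV[R]_d) : Prop :=
  exists S : seq 'rV[R]_d, S != [::] /\ (forall x, x \in S -> lattice_pt x) /\
    P = conv S /\ conv_dim S = d.

Definition hP (d : nat) (P : set 'rV[R]_d) (a : 'rV[R]_d) : R :=
  inf [set dotp a x | x in P].

Definition fine_adjoint (d : nat) (P : set 'rV[R]_d) (s : R) : set 'rV[R]_d :=
  [set x | forall a : 'rV[R]_d, lattice_pt a -> a != 0 -> hP P a + s <= dotp a x].

Definition fine_number (d : nat) (P : set 'rV[R]_d) : R :=
  sup [set s | 0 < s /\ fine_adjoint P s !=set0].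

Definition fine_codegree (d : nat) (P : set 'rV[R]_d) : R := (fine_number P)^-1.

Definition fine_core (d : nat) (P : set 'rV[R]_d) : set 'rV[R]_d :=
  fine_adjoint P (fine_number P).

Definition fine_core_normal (d : nat) (P : set 'rV[R]_d) (a : 'rV[R]_d) : Prop :=
  lattice_pt a /\ a != 0 /\
  forall y, fine_core P y -> dotp a y = hP P a + fine_number P.

End Fine.

(* Write the core normals as a_i = c_i B, where B is an integer matrix with
   independent rows and the c_i are integer vectors (Smith normal form); B has
   at most l rows because the a_i satisfy a positive linear relation.  Let Q be
   the image of P under x |-> B x.  Since h_Q(c) = h_P(cB), this map sends
   P^F(s) into Q^F(s), so n^F(P) <= n^F(Q).  Conversely, pairing
   sum_i lam_i c_i = 0 with a point of Q^F(s) gives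
   sum_i lam_i (h_P(a_i) + s) <= 0, while pairing sum_i lam_i a_i = 0 with a
   point of the Fine core of P (nonempty by compactness) gives
   sum_i lam_i (h_P(a_i) + n^F(P)) = 0; hence s <= n^F(P). *)

From HB Require Import structures.
From mathcomp Require Import all_boot all_order all_algebra.
From mathcomp Require Import boolp classical_sets functions reals.
From mathcomp Require Import topology normedtype.
Import Order.TTheory GRing.Theory Num.Theory.
Import numFieldNormedType.Exports.
Local Open Scope ring_scope.
Local Open Scope classical_set_scope.
Set Implicit Arguments. Unset Strict Implicit. Unset Printing Implicit Defensive.

Section Pairing.
Variable R : realType.

Lemma dotpE d (a x : 'rV[R]_d) : dotp a x = (x *m a^T) 0 0.
Proof. by rewrite /dotp !mxE; apply: eq_bigr => i _; rewrite mxE mulrC. Qed.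

Lemma dotpC d (a x : 'rV[R]_d) : dotp a x = dotp x a.
Proof. by rewrite /dotp; apply: eq_bigr => i _; rewrite mulrC. Qed.

Lemma dotp0l d (x : 'rV[R]_d) : dotp 0 x = 0.
Proof. by rewrite /dotp big1 // => i _; rewrite mxE mul0r. Qed.

Lemma dotpNl d (a x : 'rV[R]_d) : dotp (- a) x = - dotp a x.
Proof. by rewrite /dotp -sumrN; apply: eq_bigr => i _; rewrite mxE mulNr. Qed.

Lemma dotp_mulmx d k (c : 'rV[R]_k) (B : 'M[R]_(k, d)) (x : 'rV[R]_d) :
  dotp c (x *m B^T) = dotp (c *m B) x.
Proof. by rewrite !dotpE trmx_mul mulmxA. Qed.

Lemma dotp_sumr d n (w : 'I_n -> R) (v : 'I_n -> 'rV[R]_d) a :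
  dotp a (\sum_i w i *: v i) = \sum_i w i * dotp a (v i).
Proof.
rewrite dotpE mulmx_suml summxE; apply: eq_bigr => i _.
by rewrite -scalemxAl mxE dotpE.
Qed.

Lemma dotp_suml d n (w : 'I_n -> R) (v : 'I_n -> 'rV[R]_d) x :
  dotp (\sum_i w i *: v i) x = \sum_i w i * dotp (v i) x.
Proof. by rewrite dotpC dotp_sumr; apply: eq_bigr => i _; rewrite dotpC. Qed.

Lemma dotp_delta d (i : 'I_d) (x : 'rV[R]_d) : dotp (delta_mx 0 i) x = x 0 i.
Proof.
rewrite /dotp (bigD1 i) //= big1 => [|j /negbTE ji]; rewrite mxE ?ji ?eqxx.
  by rewrite mul1r addr0.
by rewrite andbF mul0r.
Qed.

Lemma dotp_continuous d (a : 'rV[R]_d) : continuous (dotp a).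
Proof.
have -> : dotp a = \sum_i (fun x : 'rV[R]_d => a 0 i * x 0 i).
  by rewrite fct_sumE.
apply: (big_ind (fun f : 'rV[R]_d -> R => continuous f)) => [x|f g fc gc x|i _ x].
- exact: cst_continuous.
- exact: (continuousD (fc x) (gc x)).
- apply: continuousM; [exact: cst_continuous | exact: coord_continuous].
Qed.

End Pairing.

Lemma lattice_pt_mxOver (R : realType) d (v : 'rV[R]_d) :
  lattice_pt v <-> v \is a mxOver Num.int.
Proof.
split=> [vl | /mxOverP vl j]; last exact: vl.
by apply/mxOverP => i j; rewrite ord1; exact: vl.
Qed.

Section SupportFunction.
Variables (R : realType) (d : nat).
Implicit Types (S : seq 'rV[R]_d) (P : set 'rV[R]_d) (a x : 'rV[R]_d).

Lemma conv_nth0 S : S != [::] -> conv S S`_0.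
Proof.
case: S => [//|x S] _; exists (fun i => (i == ord0)%:R).
split; first by move=> i; case: (_ == _).
split; first by rewrite big_ord_recl eqxx big1 ?addr0.
by rewrite big_ord_recl eqxx scale1r big1 ?addr0 // => i _; rewrite scale0r.
Qed.

Lemma has_lbound_dotp_conv S a : has_lbound [set dotp a x | x in conv S].
Proof.
pose M := \sum_(i < size S) `|dotp a S`_i|.
exists (- M) => _ [x [w [w0 [w1 ->]]] <-]; rewrite dotp_sumr.
rewrite -[- M]mul1r -w1 mulr_suml; apply: ler_sum => i _; apply: ler_wpM2l => //.
rewrite lerNl; apply: le_trans (ler_norm _) _; rewrite normrN.
by rewrite /M (bigD1 i) //= lerDl sumr_ge0.
Qed.

Lemma hP_conv_le S a x : conv S x -> hP (conv S) a <= dotp a x.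
Proof. by move=> Sx; apply: (ge_inf (has_lbound_dotp_conv S a)); exists x. Qed.

Lemma conv_map k S (B : 'M[R]_(k, d)) :
  conv (map (fun x => x *m B^T) S) = (fun x => x *m B^T) @` conv S.
Proof.
have mapE (w : 'I_(size S) -> R) :
    \sum_i w i *: (map (fun x => x *m B^T) S)`_i = (\sum_i w i *: S`_i) *m B^T.
  by rewrite mulmx_suml; apply: eq_bigr => i _; rewrite -scalemxAl (nth_map 0).
rewrite /conv size_map; apply/seteqP; split => y.
  by move=> [w [w0 [w1 ->]]]; exists (\sum_i w i *: S`_i); [exists w | rewrite mapE].
by move=> [x [w [w0 [w1 ->]]] <-]; exists w; rewrite mapE.
Qed.

Lemma hP_image_mulmx k P (B : 'M[R]_(k, d)) (c : 'rV[R]_k) :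
  hP ((fun x => x *m B^T) @` P) c = hP P (c *m B).
Proof.
rewrite /hP; congr inf; apply/seteqP; split => t.
  by move=> [_ [x Px <-] <-]; exists x => //; rewrite dotp_mulmx.
by move=> [x Px <-]; exists (x *m B^T); [exists x | rewrite dotp_mulmx].
Qed.

End SupportFunction.

Section FineAdjoint.
Variables (R : realType) (d : nat).
Implicit Types (P : set 'rV[R]_d) (a x : 'rV[R]_d) (s : R).

Lemma fine_adjoint_subset P s s' :
  s <= s' -> fine_adjoint P s' `<=` fine_adjoint P s.
Proof. by move=> ss' x Px a al a0; apply: le_trans (Px a al a0); rewrite lerD2l. Qed.

Lemma closed_fine_adjoint P s : closed (fine_adjoint P s).
Proof.
have -> : fine_adjoint P s = \bigcap_(a in [set a | lattice_pt a /\ a != 0])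
    (dotp a @^-1` [set t | hP P a + s <= t]).
  by apply/seteqP; split => x Px a; [case; exact: Px | move=> al a0; exact: (Px a)].
apply: closed_bigI => a _; apply: preimage_closed; last exact: closed_ge.
by move=> x _; exact: dotp_continuous.
Qed.

Lemma fine_adjoint_coord_bounds P s x i : 0 <= s -> fine_adjoint P s x ->
  hP P (delta_mx 0 i) <= x 0 i <= - hP P (- delta_mx 0 i).
Proof.
move=> s0 Px; have el : lattice_pt (delta_mx 0 i : 'rV[R]_d).
  by move=> j; rewrite mxE; case: (_ && _).
have eNl : lattice_pt (- delta_mx 0 i : 'rV[R]_d).
  by move=> j; rewrite mxE rpredN; exact: el.
have e0 : delta_mx 0 i != 0 :> 'rV[R]_d.
  by apply/eqP => /rowP/(_ i); rewrite !mxE !eqxx => /eqP; rewrite oner_eq0.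
have := Px _ eNl; rewrite oppr_eq0 dotpNl dotp_delta => /(_ e0) hN.
have := Px _ el e0; rewrite dotp_delta => h.
by rewrite (le_trans _ h) ?lerDl //= lerNr (le_trans _ hN) ?lerDl.
Qed.

Lemma fine_adjoint_common_point P (E : set R) :
  E `<=` [set s | 0 <= s] -> (forall s, E s -> fine_adjoint P s !=set0) ->
  E !=set0 -> exists p, forall s, E s -> fine_adjoint P s p.
Proof.
move=> E0 EP [s1 Es1].
pose I i := `[hP P (delta_mx 0 i), - hP P (- delta_mx 0 i)]%classic.
pose K := [set v : 'rV[R]_d | forall i, I i (v ord0 i)].
have Kc : compact K by apply: (@rV_compact _ _ I) => i; exact: segment_compact.
pose F := filter_from E (fine_adjoint P).
have FF : ProperFilter F.
  apply: filter_from_proper; last exact: EP.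
  apply: filter_from_filter; first by exists s1.
  move=> s s' Es Es'; have [ss'|s's] := leP s s'.
    by exists s' => // x Px; split => //; exact: fine_adjoint_subset Px.
  by exists s => // x Px; split => //; apply: fine_adjoint_subset Px; exact: ltW.
have FK : F K.
  exists s1 => // x Px i; rewrite /I /= in_itv /=.
  exact: fine_adjoint_coord_bounds (E0 _ Es1) Px.
have [p [_ clp]] := Kc F FF FK.
exists p => s Es; have /closure_id -> := @closed_fine_adjoint P s.
by move=> B pB; apply: clp => //; exists s.
Qed.

Lemma fine_adjoint_sup P (E : set R) x :
  E !=set0 -> (forall s, E s -> fine_adjoint P s x) -> fine_adjoint P (sup E) x.
Proof.
move=> En Ex a al a0; rewrite leNgt; apply/negP; rewrite -ltrBlDl => /(sup_gt En).
by case=> s /Ex/(_ a al a0); rewrite -lerBrDl leNgt => /negP.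
Qed.

Lemma fine_core_neq0 P : fine_adjoint P 0 !=set0 -> fine_core P !=set0.
Proof.
move=> P0; rewrite /fine_core /fine_number.
set E := [set s | 0 < s /\ fine_adjoint P s !=set0].
(* With no admissible s > 0, the Fine number is sup set0 = 0. *)
have [En|/nonemptyPn->] := pselect (E !=set0); last by rewrite sup0.
have [|p Ep] := @fine_adjoint_common_point P E _ (fun s Es => Es.2) En.
  by move=> s [s0 _]; exact: ltW.
by exists p; exact: fine_adjoint_sup.
Qed.

Lemma lattice_polytope_fine_core_neq0 P :
  full_dim_lattice_polytope P -> fine_core P !=set0.
Proof.
case=> S [Sne [_ [-> _]]]; apply: fine_core_neq0; exists S`_0 => a _ _.
by rewrite addr0; apply: hP_conv_le; exact: conv_nth0.
Qed.

End FineAdjoint.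

Section PositiveRelation.
Variables (R : realType) (d n : nat) (P : set 'rV[R]_d).
Variables (v : 'I_n -> 'rV[R]_d) (w : 'I_n -> R).
Hypothesis relation : \sum_i w i *: v i = 0.

Lemma fine_adjoint_relation s x : fine_adjoint P s x ->
  (forall i, lattice_pt (v i)) -> (forall i, v i != 0) -> (forall i, 0 <= w i) ->
  \sum_i w i * (hP P (v i) + s) <= 0.
Proof.
move=> Px vl v0 w0; rewrite -[X in _ <= X](dotp0l x) -relation dotp_suml.
by apply: ler_sum => i _; apply: ler_wpM2l => //; exact: Px.
Qed.

Lemma fine_core_relation y : fine_core P y ->
  (forall i, fine_core_normal P (v i)) ->
  \sum_i w i * (hP P (v i) + fine_number P) = 0.
Proof.
move=> Py vn; rewrite -[RHS](dotp0l y) -relation dotp_suml.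
by apply: eq_bigr => i _; rewrite (vn i).2.2.
Qed.

End PositiveRelation.

Lemma weighted_sum_shift_le (R : numDomainType) n (w h : 'I_n -> R) s t :
  0 < \sum_i w i ->
  \sum_i w i * (h i + s) <= \sum_i w i * (h i + t) -> s <= t.
Proof.
have sumE u : \sum_i w i * (h i + u) = \sum_i w i * h i + (\sum_i w i) * u.
  by under eq_bigr do rewrite mulrDr; rewrite big_split mulr_suml.
by move=> w0; rewrite !sumE lerD2l ler_pM2l.
Qed.

Section IntegerProjection.
Variables (R : realType) (d k : nat) (B : 'M[R]_(k, d)).
Hypotheses (B_int : B \is a mxOver Num.int) (B_free : row_free B).

Let proj (x : 'rV[R]_d) := x *m B^T.

Lemma lattice_pt_mulmx (c : 'rV[R]_k) : lattice_pt c -> lattice_pt (c *m B).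
Proof. by move=> /lattice_pt_mxOver cl; apply/lattice_pt_mxOver; exact: mxOverM. Qed.

Lemma fine_adjoint_proj P s y :
  fine_adjoint P s y -> fine_adjoint (proj @` P) s (proj y).
Proof.
move=> Py c cl c0; rewrite hP_image_mulmx dotp_mulmx.
by apply: Py; [exact: lattice_pt_mulmx | rewrite mulmx_free_eq0].
Qed.

Lemma full_dim_lattice_polytope_proj P :
  full_dim_lattice_polytope P -> full_dim_lattice_polytope (proj @` P).
Proof.
case=> S [Sne [Sl [-> Sdim]]]; exists (map proj S).
split; first by rewrite -size_eq0 size_map size_eq0.
split.
  move=> _ /mapP [x /Sl /lattice_pt_mxOver xl ->]; apply/lattice_pt_mxOver.
  by apply: mxOverM => //; apply/mxOverP => i j; rewrite mxE (mxOverP B_int).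
split; first by rewrite conv_map.
have S0 : (0 < size S)%N by rewrite lt0n size_eq0.
rewrite /conv_dim size_map.
have -> : \matrix_(i < size S) ((map proj S)`_i - (map proj S)`_0) =
    \matrix_(i < size S) (S`_i - S`_0) *m B^T.
  by apply/row_matrixP => i; rewrite row_mul !rowK !(nth_map 0) // mulmxBl.
by rewrite (eqmxMfull _ (introT eqP Sdim)) mxrank_tr; exact/eqP.
Qed.

Lemma fine_number_proj P n (a : 'I_n.+1 -> 'rV[R]_d) (c : 'I_n.+1 -> 'rV[R]_k)
    (w : 'I_n.+1 -> R) :
  fine_core P !=set0 -> (forall i, fine_core_normal P (a i)) ->
  (forall i, lattice_pt (c i)) -> (forall i, a i = c i *m B) ->
  (forall i, 0 < w i) -> \sum_i w i *: a i = 0 ->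
  fine_number (proj @` P) = fine_number P.
Proof.
move=> [y Py] an cl ac w0 wa.
have wc : \sum_i w i *: c i = 0.
  apply/eqP; rewrite -(mulmx_free_eq0 _ B_free) mulmx_suml -[X in _ == X]wa.
  by apply/eqP/eq_bigr => i _; rewrite -scalemxAl ac.
have c0 i : c i != 0.
  by apply: contra_neq (an i).2.1 => ci0; rewrite ac ci0 mul0mx.
rewrite /fine_number; congr sup; apply/seteqP; split => s [s0 [x Px]]; split => //;
  last by exists (proj x); exact: fine_adjoint_proj.
have sn : s <= fine_number P.
  apply: (@weighted_sum_shift_le _ _ w (fun i => hP P (a i))).
    by rewrite (bigD1 ord0) //= ltr_wpDr ?sumr_ge0 // => i _; exact: ltW.
  rewrite (fine_core_relation wa Py an).
  under eq_bigr do rewrite ac -hP_image_mulmx.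
  by apply: (fine_adjoint_relation wc Px cl c0) => i; exact: ltW.
by exists y; apply: fine_adjoint_subset sn _ Py.
Qed.

End IntegerProjection.

Lemma diag_mx_factor_free (F : fieldType) m n (D : 'M[F]_(m, n)) :
  is_diag_mx D ->
  exists k (f : 'I_k -> 'I_m),
    D = colsub f 1%:M *m rowsub f D /\ row_free (rowsub f D).
Proof.
move=> /is_diag_mxP Ddiag; pose J := [pred i | row i D != 0].
exists #|J|, enum_val; split.
  apply/matrixP => i j; rewrite mxE; under eq_bigr do rewrite !mxE.
  rewrite -(big_enum_val (fun x => (i == x)%:R * D x j)).
  have [iJ|iJ] := boolP (i \in J).
    rewrite (bigD1 i) //= eqxx mul1r big1 ?addr0 // => x /andP [_ xi].
    by rewrite eq_sym (negbTE xi) mul0r.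
  rewrite big1 => [|x xJ]; last by rewrite (negbTE (contraNneq _ iJ)) ?mul0r // => ->.
  by move: iJ; rewrite inE negbK => /eqP/rowP/(_ j); rewrite !mxE.
apply/inj_row_free => v /rowP v0; apply/rowP => r.
have /existsP [j Drj] : [exists j, D (enum_val r) j != 0].
  move: (enum_valP r); rewrite inE; apply: contraTT => /existsPn Dr0.
  by rewrite negbK; apply/eqP/rowP => j; rewrite !mxE; exact/eqP/negPn/Dr0.
have rj : enum_val r = j :> nat by apply/eqP; apply: contraNT Drj => /Ddiag ->.
have := v0 j; rewrite !mxE (bigD1 r) //= big1 ?addr0 => [|r' r'r].
  by move/eqP; rewrite mxE mulf_eq0 (negbTE Drj) orbF => /eqP.
by rewrite mxE Ddiag ?mulr0 // -rj; apply: contra r'r => /eqP/val_inj/enum_val_inj ->.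
Qed.

Lemma mxrank_lt_rows (F : fieldType) m n (A : 'M[F]_(m, n)) (u : 'rV[F]_m) :
  u != 0 -> u *m A = 0 -> (\rank A < m)%N.
Proof.
move=> u0 uA; rewrite ltnNge row_leq_rank; apply: contra u0 => Afree.
by rewrite -(mulmx_free_eq0 _ Afree) uA.
Qed.

Section IntegerFactorization.
Variable R : archiRealFieldType.
Local Notation toR := (map_mx (@intmul R 1)).

Lemma int_mx_factor_free m n (A : 'M[R]_(m, n)) :
  A \is a mxOver Num.int ->
  exists k (C : 'M[R]_(m, k)) (B : 'M[R]_(k, n)),
    [/\ (k <= \rank A)%N, C \is a mxOver Num.int, B \is a mxOver Num.int,
        row_free B & A = C *m B].
Proof.
move=> /mxOverP Aint.
have [L Lu [U Uu [dd _ Adec]]] := int_Smith_normal_form (map_mx Num.floor A).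
set D := \matrix_(i, j) _ in Adec.
have toR_int p q (M : 'M[int]_(p, q)) : toR M \is a mxOver Num.int.
  by apply/mxOverP => i j; rewrite mxE intr_int.
have toR_unit p (M : 'M[int]_p) : M \in unitmx -> toR M \in unitmx.
  by rewrite !unitmxE det_map_mx; exact: rmorph_unit.
have AE : A = toR L *m toR D *m toR U.
  rewrite -!map_mxM -Adec; apply/matrixP => i j; rewrite !mxE.
  exact/esym/floorK/Aint.
have Ddiag : is_diag_mx (toR D).
  by apply/is_diag_mxP => i j ij; rewrite !mxE (negbTE ij) mulr0n.
have [k [f [Dfac Dfree]]] := diag_mx_factor_free Ddiag.
exists k, (toR L *m colsub f 1%:M), (rowsub f (toR D) *m toR U); split.
- rewrite -(eqP Dfree) rowsubE; apply: leq_trans (mxrankM_maxr _ _) _.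
  have -> : toR D = invmx (toR L) *m A *m invmx (toR U).
    by rewrite AE mulmxA mulmxK ?mulKmx ?toR_unit.
  exact: leq_trans (mxrankM_maxl _ _) (mxrankM_maxr _ _).
- apply: mxOverM => //; apply/mxOverP => i j; rewrite !mxE.
  by rewrite rpredMn ?rpred1.
- by apply: mxOverM => //; apply/mxOverP => i j; rewrite mxE (mxOverP (toR_int _ _ D)).
- by rewrite /row_free mxrankMfree ?row_free_unit ?toR_unit.
- by rewrite mulmxA -(mulmxA _ (colsub f _)) -Dfac.
Qed.

End IntegerFactorization.

Theorem mainTheorem2 (R : realType) (d : nat) (P : set 'rV[R]_d)
  (HP : full_dim_lattice_polytope P)
  (l : nat) (a : 'I_l.+1 -> 'rV[R]_d) (lam : 'I_l.+1 -> R)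
  (Ha : forall i, fine_core_normal P (a i))
  (Hlam : forall i, 0 < lam i)
  (Hsum : \sum_(i < l.+1) lam i *: a i = 0) :
  exists k : nat, (k <= l)%N /\
    exists Q : set 'rV[R]_k, full_dim_lattice_polytope Q /\
      fine_codegree P = fine_codegree Q.
Proof.
pose A := \matrix_i a i.
have Aint : A \is a mxOver Num.int.
  by apply/mxOverP => i j; rewrite mxE; case: (Ha i) => /(_ j).
have [k [C [B [kA Cint Bint Bfree AE]]]] := int_mx_factor_free Aint.
have rkA : (\rank A < l.+1)%N.
  apply: (@mxrank_lt_rows _ _ _ _ (\row_i lam i)).
    by apply/eqP => /rowP/(_ ord0)/eqP; rewrite !mxE; exact/negP/lt0r_neq0.
  by rewrite mulmx_sum_row -[RHS]Hsum; apply: eq_bigr => i _; rewrite rowK mxE.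
exists k; split; first exact: leq_trans kA rkA.
exists ((fun x => x *m B^T) @` P); split; first exact: full_dim_lattice_polytope_proj.
have Cl i : lattice_pt (row i C) by move=> j; rewrite mxE; exact: (mxOverP Cint).
have aC i : a i = row i C *m B by rewrite -row_mul -AE rowK.
by rewrite /fine_codegree (fine_number_proj Bint Bfree
  (lattice_polytope_fine_core_neq0 HP) Ha Cl aC Hlam Hsum).
Qed.
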